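(* Let $V$ be a real vector space of dimension $d>1$ and $\Gamma<\mathrm{SL}(V)$ a torsion-free projective Anosov subgroup. If $\gamma_k\in\Gamma$ is a sequence with distinct boundary limits $\gamma_+=\lim\gamma_k\in\partial_\infty\Gamma$ and $\gamma_-=\lim\gamma_k^{-1}\in\partial_\infty\Gamma$, then $\lambda_1(\gamma_k)\to\infty$.
   Context: For $g\in\mathrm{SL}(V)$, $\lambda_1(g)$ is the logarithm of the spectral radius of $g$ (more generally $\lambda_1\ge\lambda_2\ge\dots$ are the logarithms of the moduli of eigenvalues). Projective Anosov: finitely generated Gromov hyperbolic with $\lambda_1(\gamma)-\lambda_2(\gamma)\ge c|\gamma|_\infty-c'$ for some $c,c'>0$, $|\cdot|_\infty$ stable word length. Limits are taken in the compactification $\Gamma\cup\partial_\infty\Gamma$ by the Gromov boundary. *)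

From HB Require Import structures.
From mathcomp Require Import all_boot all_order all_algebra.
From mathcomp Require Import all_classical all_reals all_analysis.
From mathcomp.real_closed Require Import complex.
Set Implicit Arguments. Unset Strict Implicit. Unset Printing Implicit Defensive.
Import Order.TTheory GRing.Theory Num.Theory numFieldNormedType.Exports.
Local Open Scope ring_scope.
Local Open Scope classical_set_scope.

Section Defs.
Variables (R : realType) (d : nat).
Implicit Types (g h : 'M[R]_d) (G : set 'M[R]_d) (S : seq 'M[R]_d).

(* complex eigenvalues (with multiplicity) of g: the roots of its characteristic
   polynomial over R[i] *)
Definition eigenvalues g : seq R[i] :=
  sval (closed_field_poly_normal (char_poly (map_mx (fun x : R => x%:C%C) g))).

Definition eig_moduli g : seq R :=
  sort (fun x y : R => y <= x) [seq ComplexField.Normc.normc z | z <- eigenvalues g].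

(* lambda_ i g = log of the i-th largest modulus of an eigenvalue
   (0-indexed: lambda_ 0 = lambda_1 of the paper, lambda_ 1 = lambda_2) *)
Definition lambda_ (i : nat) g : R := ln (nth 0 (eig_moduli g) i).

Definition mpow g (k : nat) : 'M[R]_d := iter k (mulmx g) 1%:M.

Definition is_subgroup_SL G : Prop :=
  [/\ G 1%:M,
      (forall g h, G g -> G h -> G (g *m h)),
      (forall g, G g -> G (invmx g)) &
      (forall g, G g -> \det g = 1)].

Definition torsion_free G : Prop :=
  forall g k, G g -> (0 < k)%N -> mpow g k = 1%:M -> g = 1%:M.

Definition is_letter S (x : 'M[R]_d) : Prop := (x \in S) \/ (invmx x \in S).
Definition word_eval (w : seq 'M[R]_d) : 'M[R]_d := foldr mulmx 1%:M w.
Definition has_word_of_length S g (m : nat) : Prop :=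
  exists w : seq 'M[R]_d,
    [/\ size w = m, (forall x, x \in w -> is_letter S x) & word_eval w = g].

Definition generates S G : Prop :=
  (forall s, s \in S -> G s) /\ (forall g, G g -> exists m, has_word_of_length S g m).

Definition word_length S g : nat :=
  xget 0%N [set m | has_word_of_length S g m /\
                    (forall m', has_word_of_length S g m' -> (m <= m')%N)].

Definition stable_length S g : R :=
  lim ((fun n : nat => ((word_length S (mpow g n.+1))%:R / (n.+1)%:R : R)) @ \oo).

(* Gromov product at the identity in the word metric d_S(x,y) = |x^{-1} y|_S *)
Definition gromov_product S g h : R :=
  ((word_length S g)%:R + (word_length S h)%:R
     - (word_length S (invmx g *m h))%:R) / 2.

Definition gromov_hyperbolic S G : Prop :=
  exists delta : R, forall x y z, G x -> G y -> G z ->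
    Num.min (gromov_product S x y) (gromov_product S y z) - delta
      <= gromov_product S x z.

Definition projective_anosov S G : Prop :=
  gromov_hyperbolic S G /\
  exists c c' : R, 0 < c /\ 0 < c' /\
    forall g, G g -> c * stable_length S g - c' <= lambda_ 0 g - lambda_ 1 g.

(* the sequence u converges (in Gamma \cup \partial Gamma) to a point of the
   Gromov boundary:  (u_i | u_j) -> oo as i, j -> oo *)
Definition converges_at_infinity S (u : nat -> 'M[R]_d) : Prop :=
  forall M : R, exists N, forall i j, (N <= i)%N -> (N <= j)%N ->
    M <= gromov_product S (u i) (u j).

(* two sequences converging at infinity have the same boundary limit *)
Definition same_boundary_limit S (u v : nat -> 'M[R]_d) : Prop :=
  forall M : R, exists N, forall i j, (N <= i)%N -> (N <= j)%N ->
    M <= gromov_product S (u i) (v j).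

End Defs.

From HB Require Import structures.
From mathcomp Require Import all_boot all_order all_algebra.
From mathcomp Require Import all_classical all_reals all_analysis.
From mathcomp.real_closed Require Import complex.
From mathcomp Require Import ring lra.
Import Order.TTheory GRing.Theory Num.Theory numFieldNormedType.Exports.
Local Open Scope ring_scope.
Local Open Scope classical_set_scope.
Set Implicit Arguments. Unset Strict Implicit. Unset Printing Implicit Defensive.

(** The argument bounds lambda_1 from below by the stable length.  Since
   [det g = 1], the two largest eigenvalue moduli have product at least 1, so
   [lambda_1 + lambda_2 >= 0] and the Anosov gap gives
   [2 lambda_1 >= c |g|_oo - c'].  In a delta-hyperbolic word metric, if the
   cancellation [(g^-1 | g)] of [g] is small compared with [|g|], the
   four-point condition applied to [g^-1, g^-(n+1), g] shows that
   [|g^(n+1)| - |g^n| >= |g| - 2 (g^-1 | g) - 2 delta] for all [n], hence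
   [|g|_oo >= |g| - 2 (g^-1 | g) - 2 delta] (the limit defining [|g|_oo]
   exists by Fekete's lemma).  Finally, [|gamma_k| -> oo] because [gamma_k]
   converges to a boundary point, while [(gamma_k^-1 | gamma_k)] stays bounded
   because [gamma_k] and [gamma_k^-1] converge to distinct boundary points. *)

Lemma prodr_seqN (F : comPzRingType) (r : seq F) :
  \prod_(z <- r) - z = (-1) ^+ size r * \prod_(z <- r) z.
Proof.
elim: r => [|z r IH]; first by rewrite !big_nil expr0 mulr1.
by rewrite !big_cons IH /= exprS; ring.
Qed.

Section Eigenvalues.
Variables (R : realType) (d : nat).
Implicit Type g : 'M[R]_d.

Lemma char_poly_eigenvalues g :
  char_poly (map_mx (fun x : R => x%:C%C) g) =
  \prod_(z <- eigenvalues g) ('X - z%:P).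
Proof.
have := svalP (closed_field_poly_normal (char_poly (map_mx (fun x : R => x%:C%C) g))).
by rewrite -/(eigenvalues g) (monicP (char_poly_monic _)) scale1r.
Qed.

Lemma size_eigenvalues g : size (eigenvalues g) = d.
Proof.
have := size_char_poly (map_mx (fun x : R => x%:C%C) g).
by rewrite char_poly_eigenvalues size_prod_XsubC => -[].
Qed.

Lemma prod_eigenvalues g : \prod_(z <- eigenvalues g) z = (\det g)%:C%C.
Proof.
have := char_poly_det (map_mx (fun x : R => x%:C%C) g).
rewrite (det_map_mx (real_complex R)) -horner_coef0 char_poly_eigenvalues.
rewrite horner_prod; under eq_bigr do rewrite hornerXsubC sub0r.
rewrite prodr_seqN size_eigenvalues => /(congr1 (fun x => (-1) ^+ d * x)).
by rewrite !mulrA -exprD -signr_odd oddD addbb expr0 !mul1r.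
Qed.

Lemma perm_eig_moduli g :
  perm_eq (eig_moduli g) [seq ComplexField.Normc.normc z | z <- eigenvalues g].
Proof. exact/permEl/perm_sort. Qed.

Lemma size_eig_moduli g : size (eig_moduli g) = d.
Proof. by rewrite (perm_size (perm_eig_moduli g)) size_map size_eigenvalues. Qed.

Lemma sorted_eig_moduli g : sorted (fun x y : R => y <= x) (eig_moduli g).
Proof. by apply: sort_sorted => x y; exact: le_total. Qed.

Lemma eig_moduli_ge0 g : all (fun x : R => 0 <= x) (eig_moduli g).
Proof.
apply/allP => x; rewrite (perm_mem (perm_eig_moduli g)) => /mapP [[a b] _ ->].
exact: sqrtr_ge0.
Qed.

Lemma prod_eig_moduli g : \prod_(x <- eig_moduli g) x = `|\det g|.
Proof.
rewrite (perm_big _ (perm_eig_moduli g)) big_map.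
rewrite -(big_morph _ (@ComplexField.Normc.normcM R) (@ComplexField.Normc.normc1 R)).
by rewrite prod_eigenvalues /= expr0n addr0 sqrtr_sqr.
Qed.

End Eigenvalues.

Lemma prod_two_largest_ge1 (R : realFieldType) (a b : R) (t : seq R) :
  sorted (fun x y => y <= x) [:: a, b & t] ->
  all (fun x => 0 <= x) [:: a, b & t] ->
  \prod_(x <- [:: a, b & t]) x = 1 -> 1 <= a * b.
Proof.
move=> /= /andP[ba sorted_bt] /and3P[a_ge0 b_ge0 /allP t_ge0].
rewrite !big_cons mulrA => prod1.
have [b_ge1|b_lt1] := leP 1 b; first by rewrite -[1]mulr1 ler_pM // (le_trans b_ge1).
have t_le_b : all (fun x => x <= b) t.
  by apply: order_path_min sorted_bt => x y z /= yx zy; exact: le_trans zy yx.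
have prodt_le1 : \prod_(x <- t) x <= 1.
  rewrite big_seq; apply: prodr_ile1 => x xt.
  by rewrite t_ge0 // (le_trans (allP t_le_b x xt)) // ltW.
by rewrite -prod1 ler_piMr // mulr_ge0.
Qed.

Lemma lambda_sum_ge0 (R : realType) (d : nat) (g : 'M[R]_d) :
  (1 < d)%N -> `|\det g| = 1 -> 0 <= lambda_ 0 g + lambda_ 1 g.
Proof.
move=> d_gt1 det1; rewrite /lambda_.
have := size_eig_moduli g; have := sorted_eig_moduli g; have := eig_moduli_ge0 g.
have := prod_eig_moduli g; rewrite det1.
case: (eig_moduli g) => [|a [|b t]] /= prod1 ge0 srt sz; try by rewrite -sz in d_gt1.
have ab_ge1 := prod_two_largest_ge1 srt ge0 prod1.
have /and3P[a_ge0 b_ge0 _] := ge0.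
have a_gt0 : 0 < a.
  by rewrite lt_def a_ge0 andbT; apply: contraTneq ab_ge1 => ->; rewrite mul0r ler10.
have b_gt0 : 0 < b.
  by rewrite lt_def b_ge0 andbT; apply: contraTneq ab_ge1 => ->; rewrite mulr0 ler10.
by rewrite -lnM ?posrE // ln_ge0.
Qed.

Section Fekete.
Variables (R : realType) (a : nat -> R).
Hypotheses (a0 : a 0%N = 0) (a_ge0 : forall n, 0 <= a n)
  (a_subadd : forall m n, a (m + n)%N <= a m + a n).

Lemma subadditive_le_mul q k : a (q * k)%N <= q%:R * a k.
Proof.
elim: q => [|q IH]; first by rewrite mul0n mul0r a0.
rewrite mulSn -addn1 natrD mulrDl mul1r; apply: le_trans (a_subadd _ _) _; lra.
Qed.

Lemma subadditive_le_ratio m n :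
  a n.+1 <= n.+1%:R * (a m.+1 / m.+1%:R) + m%:R * a 1%N.
Proof.
set rho := a m.+1 / m.+1%:R.
have rho_ge0 : 0 <= rho by rewrite divr_ge0.
have am : a m.+1 = m.+1%:R * rho by rewrite mulrC divfK ?pnatr_eq0.
rewrite (divn_eq n.+1 m.+1); set q := (n.+1 %/ m.+1)%N; set r := (n.+1 %% m.+1)%N.
have r_le_m : (r <= m)%N by rewrite -ltnS ltn_mod.
have aqm : a (q * m.+1)%N <= (q * m.+1)%:R * rho.
  by rewrite natrM -mulrA -am subadditive_le_mul.
have ar : a r <= r%:R * a 1%N by rewrite -[X in a X]muln1 subadditive_le_mul.
have ar_le : r%:R * a 1%N <= m%:R * a 1%N by rewrite ler_wpM2r // ler_nat.
have qm_le : (q * m.+1)%:R * rho <= (q * m.+1 + r)%N%:R * rho.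
  by rewrite ler_wpM2r // ler_nat leq_addr.
apply: le_trans (a_subadd _ _) _; lra.
Qed.

Lemma cvg_subadditive_ratio : cvg ((fun n => a n.+1 / n.+1%:R) @ \oo).
Proof.
set b := fun n => a n.+1 / n.+1%:R.
have b_ge0 n : 0 <= b n by rewrite divr_ge0.
have inf_b : has_inf (range b) by split; [exists (b 0%N), 0%N | exists 0 => _ [n _ <-]].
apply/cvg_ex; exists (inf (range b)); apply/cvgrPdist_le => e e_gt0.
have [_ [m _ <-] bm] := inf_adherent (divr_gt0 e_gt0 (ltr0Sn _ 1)) inf_b.
have K_ge0 : 0 <= m%:R * a 1%N by rewrite mulr_ge0.
near=> n.
have inf_le : inf (range b) <= b n by apply: (ge_inf inf_b.2); exists n.
have n_gt0 : 0 < n.+1%:R :> R by rewrite ltr0Sn.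
have bn : b n <= b m + e / 2.
  have tail_small : m%:R * a 1%N / n.+1%:R <= e / 2.
    have n_large : 2 * (m%:R * a 1%N) / e <= n%:R by near: n; exact: nbhs_infty_ger.
    have e_ge0 := ltW e_gt0.
    move: n_large; rewrite !ler_pdivrMr // -[n.+1%:R]natr1; nra.
  rewrite -(lerD2l (b m)) in tail_small; apply: le_trans tail_small.
  by rewrite /b ler_pdivrMr // mulrDl divfK ?gt_eqF // mulrC subadditive_le_ratio.
have close : b n - inf (range b) <= e by lra.
by rewrite ler0_norm ?subr_le0 // opprB.
Unshelve. all: by end_near.
Qed.

End Fekete.

Lemma invmxM (R : comUnitRingType) n (A B : 'M[R]_n) :
  A \in unitmx -> B \in unitmx -> invmx (A *m B) = invmx B *m invmx A.
Proof.
move=> uA uB; have uAB : A *m B \in unitmx by rewrite unitmx_mul uA uB.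
have inv_left : (invmx B *m invmx A) *m (A *m B) = 1%:M.
  by rewrite -mulmxA [invmx A *m _]mulmxA mulVmx // mul1mx mulVmx.
by rewrite -[invmx B *m _]mulmx1 -(mulmxV uAB) mulmxA inv_left mul1mx.
Qed.

Lemma thin_chain_linear_growth (R : realFieldType) (a : nat -> R) (L A delta : R) :
  a 0%N = 0 -> a 1%N = L -> 0 <= A + delta -> 2 * A + 2 * delta < L ->
  (forall n, Num.min ((L + a n.+1 - a n) / 2) ((a n.+1 + L - a n.+2) / 2) - delta
               <= A) ->
  forall n, n%:R * (L - 2 * A - 2 * delta) <= a n.
Proof.
move=> a0 a1 A_delta_ge0 L_large thin.
have step n : a n + (L - 2 * A - 2 * delta) <= a n.+1.
  elim: n => [|n IH]; first by rewrite a0 a1; lra.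
  by have := thin n; rewrite lerBlDr ge_min => /orP[]; lra.
elim=> [|n IH]; first by rewrite a0 mul0r.
by have := step n; rewrite -natr1; lra.
Qed.

Lemma gromov_hyperbolic_nonneg (R : realType) (d : nat) (S : seq 'M[R]_d)
    (G : set 'M[R]_d) :
  gromov_hyperbolic S G ->
  exists2 delta : R, 0 <= delta & forall x y z, G x -> G y -> G z ->
    Num.min (gromov_product S x y) (gromov_product S y z) - delta
      <= gromov_product S x z.
Proof.
case=> delta thin; exists (Num.max delta 0); first by rewrite le_max lexx orbT.
move=> x y z Gx Gy Gz; apply: le_trans (thin x y z Gx Gy Gz).
by rewrite lerB // le_max lexx.
Qed.

Section WordMetric.
Variables (R : realType) (d : nat).
Implicit Types (g : 'M[R]_d) (w : seq 'M[R]_d).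

Lemma word_eval_cat w1 w2 : word_eval (w1 ++ w2) = word_eval w1 *m word_eval w2.
Proof. by elim: w1 => [|x w IH] /=; rewrite ?mul1mx // IH mulmxA. Qed.

Lemma mpowSr g k : mpow g k.+1 = mpow g k *m g.
Proof.
elim: k => [|k IH]; first by rewrite /mpow /= mulmx1 mul1mx.
by rewrite -[LHS]/(g *m mpow g k.+1) {1}IH mulmxA.
Qed.

Lemma mpowD g k l : mpow g (k + l) = mpow g k *m mpow g l.
Proof.
elim: k => [|k IH]; first by rewrite add0n /mpow /= mul1mx.
by rewrite addSn -[LHS]/(g *m mpow g (k + l)) IH mulmxA.
Qed.

Variables (Gamma : set 'M[R]_d) (S : seq 'M[R]_d).
Hypotheses (Gamma_SL : is_subgroup_SL Gamma) (S_gen : generates S Gamma).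

Lemma Gamma1 : Gamma 1%:M.
Proof. by case: Gamma_SL. Qed.

Lemma GammaM g h : Gamma g -> Gamma h -> Gamma (g *m h).
Proof. by case: Gamma_SL => _ + _ _; apply. Qed.

Lemma GammaV g : Gamma g -> Gamma (invmx g).
Proof. by case: Gamma_SL => _ _ + _; apply. Qed.

Lemma Gamma_det g : Gamma g -> \det g = 1.
Proof. by case: Gamma_SL => _ _ _; apply. Qed.

Lemma Gamma_unit g : Gamma g -> g \in unitmx.
Proof. by move/Gamma_det; rewrite unitmxE => ->; exact: unitr1. Qed.

Lemma Gamma_mpow g k : Gamma g -> Gamma (mpow g k).
Proof. by move=> Gg; elim: k => [|k IH]; [exact: Gamma1 | exact: GammaM]. Qed.

Lemma Gamma_letter x : is_letter S x -> Gamma x.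
Proof. by case: S_gen => S_Gamma _ [/S_Gamma //|/S_Gamma/GammaV]; rewrite invmxK. Qed.

Lemma letterV x : is_letter S x -> is_letter S (invmx x).
Proof. by case=> [xS|]; [right; rewrite invmxK | left]. Qed.

Lemma Gamma_word w : (forall x, x \in w -> is_letter S x) -> Gamma (word_eval w).
Proof.
elim: w => [|x w IH] w_letters /=; first exact: Gamma1.
apply: GammaM; first by apply/Gamma_letter/w_letters; rewrite inE eqxx.
by apply: IH => y yw; apply: w_letters; rewrite inE yw orbT.
Qed.

Lemma word_eval_rev_inv w : (forall x, x \in w -> is_letter S x) ->
  word_eval (rev (map invmx w)) = invmx (word_eval w).
Proof.
elim: w => [|x w IH] w_letters /=; first by rewrite invmx1.
have x_letter : is_letter S x by apply: w_letters; rewrite inE eqxx.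
have w_letters' y : y \in w -> is_letter S y.
  by move=> yw; apply: w_letters; rewrite inE yw orbT.
rewrite rev_cons -cats1 word_eval_cat IH // /= mulmx1 invmxM //.
  exact/Gamma_unit/Gamma_letter.
exact/Gamma_unit/Gamma_word.
Qed.

Local Notation wl := (word_length S).

Lemma word_lengthP g : Gamma g ->
  has_word_of_length S g (wl g) /\
  forall m, has_word_of_length S g m -> (wl g <= m)%N.
Proof.
case: S_gen => _ /[apply] -[m0 word_m0].
have ex_word : exists m, `[< has_word_of_length S g m >] by exists m0; exact/asboolP.
have [m /asboolP word_m m_min] := ex_minnP ex_word.
apply: (@xgetPex _ 0%N (fun m => has_word_of_length S g m /\
  (forall m', has_word_of_length S g m' -> (m <= m')%N))).
by exists m; split=> // m' /asboolP; exact: m_min.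
Qed.

Lemma word_length_word g : Gamma g -> has_word_of_length S g (wl g).
Proof. by case/word_lengthP. Qed.

Lemma word_length_min g m : Gamma g -> has_word_of_length S g m -> (wl g <= m)%N.
Proof. by case/word_lengthP => _; apply. Qed.

Lemma word_length1 : wl 1%:M = 0%N.
Proof.
apply/eqP; rewrite -leqn0; apply: word_length_min; first exact: Gamma1.
by exists [::]; split.
Qed.

Lemma word_lengthM g h : Gamma g -> Gamma h -> (wl (g *m h) <= wl g + wl h)%N.
Proof.
move=> Gg Gh; apply: word_length_min; first exact: GammaM.
have [w1 [size1 letters1 eval1]] := word_length_word Gg.
have [w2 [size2 letters2 eval2]] := word_length_word Gh.
exists (w1 ++ w2); split; first by rewrite size_cat size1 size2.
  by move=> x; rewrite mem_cat => /orP[/letters1|/letters2].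
by rewrite word_eval_cat eval1 eval2.
Qed.

Lemma word_lengthV_le g : Gamma g -> (wl (invmx g) <= wl g)%N.
Proof.
move=> Gg; apply: word_length_min; first exact: GammaV.
have [w [size_w letters eval_w]] := word_length_word Gg.
exists (rev (map invmx w)); split; first by rewrite size_rev size_map.
  by move=> x; rewrite mem_rev => /mapP[y /letters y_letter ->]; exact: letterV.
by rewrite word_eval_rev_inv // eval_w.
Qed.

Lemma word_lengthV g : Gamma g -> wl (invmx g) = wl g.
Proof.
move=> Gg; apply/eqP; rewrite eqn_leq word_lengthV_le //=.
by have := word_lengthV_le (GammaV Gg); rewrite invmxK.
Qed.

Lemma gromov_productC g h : Gamma g -> Gamma h ->
  gromov_product S g h = gromov_product S h g.
Proof.
move=> Gg Gh; have Gg' := GammaV Gg.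
rewrite /gromov_product -[wl (invmx g *m h)]word_lengthV; last exact: GammaM.
by rewrite invmxM ?invmxK ?Gamma_unit // (addrC (wl g)%:R).
Qed.

Lemma gromov_product_id g : Gamma g -> gromov_product S g g = (wl g)%:R.
Proof. by move=> Gg; rewrite /gromov_product mulVmx ?Gamma_unit // word_length1; lra. Qed.

Lemma gromov_product_ge0 g h : Gamma g -> Gamma h -> 0 <= gromov_product S g h.
Proof.
move=> Gg Gh; rewrite /gromov_product divr_ge0 // subr_ge0 -natrD ler_nat.
apply: leq_trans (word_lengthM (GammaV Gg) Gh) _.
by rewrite word_lengthV.
Qed.

Lemma word_length_cvgy (gamma : nat -> 'M[R]_d) :
  (forall k, Gamma (gamma k)) -> converges_at_infinity S gamma ->
  (fun k => (wl (gamma k))%:R : R) @ \oo --> +oo.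
Proof.
move=> Gamma_gamma conv; apply/cvgryPge => M; have [N far] := conv M.
near=> k; rewrite -gromov_product_id //.
by apply: far; near: k; exact: nbhs_infty_ge.
Unshelve. all: by end_near.
Qed.

Section Hyperbolic.
Variable delta : R.
Hypotheses (delta_ge0 : 0 <= delta)
  (thin : forall x y z, Gamma x -> Gamma y -> Gamma z ->
     Num.min (gromov_product S x y) (gromov_product S y z) - delta
       <= gromov_product S x z).

Local Notation "( g | h )" := (gromov_product S g h).

Lemma thin_le M x y z : Gamma x -> Gamma y -> Gamma z ->
  M <= (x | y) -> M <= (y | z) -> M - delta <= (x | z).
Proof.
move=> Gx Gy Gz xy yz; apply: le_trans (thin Gx Gy Gz).
by rewrite lerD2r minEle; case: ifP.
Qed.

Lemma thin_powers g n : Gamma g ->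
  Num.min (((wl g)%:R + (wl (mpow g n.+1))%:R - (wl (mpow g n))%:R) / 2)
          (((wl (mpow g n.+1))%:R + (wl g)%:R - (wl (mpow g n.+2))%:R) / 2) - delta
    <= (invmx g | g).
Proof.
move=> Gg; have Gn := Gamma_mpow n Gg; have Gn1 := Gamma_mpow n.+1 Gg.
have := thin (GammaV Gg) (GammaV Gn1) Gg.
rewrite /gromov_product !invmxK !word_lengthV // ?GammaV //.
rewrite [X in g *m invmx X]mpowSr invmxM ?Gamma_unit // mulmxA mulmxV ?Gamma_unit //.
by rewrite mul1mx word_lengthV // -mpowSr; apply.
Qed.

Lemma stable_length_ge g : Gamma g ->
  (wl g)%:R - 2 * (invmx g | g) - 2 * delta <= stable_length S g.
Proof.
move=> Gg; set A := (invmx g | g); set L := (wl g)%:R.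
pose a n : R := (wl (mpow g n))%:R.
have a0 : a 0%N = 0 by rewrite /a word_length1.
have a1 : a 1%N = L by rewrite /a /mpow /= mulmx1.
have a_ge0 n : 0 <= a n by rewrite ler0n.
have a_subadd m n : a (m + n)%N <= a m + a n.
  by rewrite /a mpowD -natrD ler_nat; apply: word_lengthM; exact: Gamma_mpow.
apply: limr_ge; first exact: cvg_subadditive_ratio a0 a_ge0 a_subadd.
have [L_large|L_small] := ltP (2 * A + 2 * delta) L; last first.
  by near=> n; apply: le_trans (divr_ge0 (a_ge0 _) (ler0n _ _)); lra.
have A_ge0 : 0 <= A by exact: gromov_product_ge0 (GammaV Gg) Gg.
have growth := thin_chain_linear_growth a0 a1 (addr_ge0 A_ge0 delta_ge0) L_large
  (fun n => thin_powers n Gg).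
by near=> n; rewrite ler_pdivlMr ?ltr0Sn // mulrC growth.
Unshelve. all: by end_near.
Qed.

Section BoundaryLimits.
Variable gamma : nat -> 'M[R]_d.
Hypotheses (Gamma_gamma : forall k, Gamma (gamma k))
  (conv : converges_at_infinity S gamma)
  (conv_inv : converges_at_infinity S (fun k => invmx (gamma k)))
  (distinct : ~ same_boundary_limit S gamma (fun k => invmx (gamma k))).

Lemma gromov_product_inv_bounded :
  exists T N, forall k, (N <= k)%N -> (invmx (gamma k) | gamma k) < T.
Proof.
move: distinct => /existsNP[M0 /forallNP not_far].
have [N1 far1] := conv (M0 + 2 * delta).
have [N2 far2] := conv_inv (M0 + 2 * delta).
exists (M0 + 2 * delta), (maxn N1 N2) => k Nk; rewrite ltNge; apply/negP => cancel_k.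
apply: (not_far (maxn N1 N2)) => i j Ni Nj.
move: (Gamma_gamma i) (GammaV (Gamma_gamma j)) (Gamma_gamma k) => Gi Gj' Gk.
have Gk' := GammaV Gk.
have ik := far1 i k (leq_trans (leq_maxl _ _) Ni) (leq_trans (leq_maxl _ _) Nk).
have kj : _ <= (invmx (gamma k) | invmx (gamma j)) :=
  far2 k j (leq_trans (leq_maxr _ _) Nk) (leq_trans (leq_maxr _ _) Nj).
rewrite -gromov_productC // in cancel_k.
have ik' := thin_le Gi Gk Gk' ik cancel_k.
have kj' : M0 + 2 * delta - delta <= (invmx (gamma k) | invmx (gamma j)).
  by apply: le_trans kj; rewrite gerBl.
apply: le_trans (thin_le Gi Gk' Gj' ik' kj'); lra.
Qed.

Lemma stable_length_cvgy : (fun k => stable_length S (gamma k)) @ \oo --> +oo.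
Proof.
have [T [N bounded]] := gromov_product_inv_bounded.
have wl_cvgy := word_length_cvgy Gamma_gamma conv.
apply/cvgryPge => M; near=> k.
apply: le_trans (stable_length_ge (Gamma_gamma k)).
have : M + 2 * T + 2 * delta <= (wl (gamma k))%:R.
  by near: k; move/cvgryPge: wl_cvgy; apply.
have : (invmx (gamma k) | gamma k) < T.
  by apply: bounded; near: k; exact: nbhs_infty_ge.
lra.
Unshelve. all: by end_near.
Qed.

End BoundaryLimits.

End Hyperbolic.

End WordMetric.

Theorem lemma2p17 (R : realType) (d : nat) (Gamma : set 'M[R]_d)
  (S : seq 'M[R]_d) (gamma : nat -> 'M[R]_d) :
  (1 < d)%N ->
  is_subgroup_SL Gamma ->
  torsion_free Gamma ->
  generates S Gamma ->
  projective_anosov S Gamma ->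
  (forall k, Gamma (gamma k)) ->
  converges_at_infinity S gamma ->
  converges_at_infinity S (fun k => invmx (gamma k)) ->
  ~ same_boundary_limit S gamma (fun k => invmx (gamma k)) ->
  (fun k => lambda_ 0 (gamma k)) @ \oo --> +oo.
Proof.
move=> d_gt1 Gamma_SL _ S_gen [hyperbolic [c [c' [c_gt0 [_ gap]]]]] Gamma_gamma
  conv conv_inv distinct.
have [delta delta_ge0 thin] := gromov_hyperbolic_nonneg hyperbolic.
have stable_cvgy := stable_length_cvgy Gamma_SL S_gen delta_ge0 thin
  Gamma_gamma conv conv_inv distinct.
apply/cvgryPge => M; near=> k.
have lambda_sum : 0 <= lambda_ 0 (gamma k) + lambda_ 1 (gamma k).
  by rewrite lambda_sum_ge0 // (Gamma_det Gamma_SL (Gamma_gamma k)) normr1.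
have gap_k := gap _ (Gamma_gamma k).
have : (2 * M + c') / c <= stable_length S (gamma k).
  by near: k; move/cvgryPge: stable_cvgy; apply.
rewrite ler_pdivrMr // => stable_large; lra.
Unshelve. all: by end_near.
Qed.
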